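(* Let $A$ be an $n\times n$ real matrix whose eigenvalues are distinct, and let $p\geq 1$ be an integer. Then the following are equivalent: (i) there exists a vector $B_v\in\mathbb{R}^n$ with at most $k$ nonzero entries such that the system $\frac{dx(t)}{dt}=Ax(t)+B_v u(t)$ is controllable; (ii) there exists a real $n\times p$ matrix $B_f$ with at most $k$ nonzero entries such that the system $\frac{dx(t)}{dt}=Ax(t)+B_f u(t)$ is controllable.
   Context: Controllability refers to the usual notion for continuous-time linear time-invariant systems $\frac{dx}{dt}=Ax+Bu$ (controllability of the pair $(A,B)$). A vector or matrix is called $k$-sparse if it has at most $k$ nonzero entries; the paper phrases (i) as ''the system $\Sigma_v$ is $k$-sparse controllable'' and (ii) as ''the system $\Sigma_f$ is $k$-sparse controllable''. *)

From HB Require Import structures.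
From mathcomp Require Import all_boot all_order all_algebra.
From mathcomp Require Import reals.
From mathcomp.real_closed Require Import complex.
Set Implicit Arguments. Unset Strict Implicit. Unset Printing Implicit Defensive.
Import Order.TTheory GRing.Theory Num.Theory.
Local Open Scope ring_scope.

Definition ctrb_mx (R : realType) (n m : nat) (A : 'M[R]_n) (B : 'M[R]_(n, m)) :=
  \mxrow_(i < n) (A ^+ i *m B).

(* The LTI system dx/dt = A x + B u is controllable (Kalman rank criterion). *)
Definition controllable (R : realType) (n m : nat) (A : 'M[R]_n) (B : 'M[R]_(n, m)) : Prop :=
  \rank (ctrb_mx A B) = n.

Definition nnz (R : realType) (n m : nat) (B : 'M[R]_(n, m)) : nat :=
  #|[set ij : 'I_n * 'I_m | B ij.1 ij.2 != 0]|.

Definition sparse (R : realType) (k n m : nat) (B : 'M[R]_(n, m)) : Prop :=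
  (nnz B <= k)%N.

Definition complexify (R : realType) (n : nat) (A : 'M[R]_n) : 'M[R[i]]_n :=
  map_mx (fun x : R => Complex x 0) A.

Definition distinct_eigenvalues (R : realType) (n : nat) (A : 'M[R]_n) : Prop :=
  forall z : R[i], (mup z (char_poly (complexify A)) <= 1)%N.

(** Padding a controllable column with zero columns keeps it controllable and
  sparse, which gives (i) => (ii).  Conversely, let [Bf] be controllable and
  let [w_1, ..., w_n] be left eigenvectors of [A] for its distinct (complex)
  eigenvalues.  By the Popov-Belevitch-Hautus test every [w_j Bf] is nonzero,
  so each [t |-> w_j Bf (1, t, ..., t^(p-1))] is a nonzero polynomial and some
  natural number [t] is a root of none of them.  For [b := Bf (1, t, ...)],
  the matrix [W [b, Ab, ..., A^(n-1) b]] is a diagonal matrix with nonzero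
  entries [w_j b] times a Vandermonde matrix in the distinct eigenvalues, hence
  invertible; and [b] has no more nonzero entries than [Bf]. *)
From mathcomp Require Import all_boot all_order all_algebra.
From mathcomp Require Import reals.
From mathcomp.real_closed Require Import complex.
Set Implicit Arguments. Unset Strict Implicit. Unset Printing Implicit Defensive.
Import Order.TTheory GRing.Theory Num.Theory.
Local Open Scope ring_scope.

Section Kalman.
Variable F : fieldType.

(* [ctrb_mx] over any field; on a [realType] the two are convertible. *)
Definition kalman_mx n m (A : 'M[F]_n) (B : 'M[F]_(n, m)) :=
  \mxrow_(i < n) (A ^+ i *m B).

Lemma kalman_mxM n m m' (A : 'M[F]_n) (B : 'M[F]_(n, m)) (M : 'M[F]_(m, m')) :
  kalman_mx A (B *m M) =
  kalman_mx A B *m \mxblock_(i < n, j < n) ((i == j)%:R *: M).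
Proof.
rewrite mul_mxrow_mxblock; apply: eq_mxrow => j.
rewrite (bigD1 j) //= big1 => [|i /negPf ij]; last by rewrite ij scale0r mulmx0.
by rewrite eqxx scale1r addr0 mulmxA.
Qed.

Lemma mxrank_kalman_mulmx n m m' (A : 'M[F]_n) (B : 'M[F]_(n, m))
    (M : 'M[F]_(m, m')) :
  (\rank (kalman_mx A (B *m M)) <= \rank (kalman_mx A B))%N.
Proof. by rewrite kalman_mxM mxrankM_maxl. Qed.

Lemma left_eigen_mulmxXn n (A : 'M[F]_n) (w : 'rV_n) lam i :
  w *m A = lam *: w -> w *m A ^+ i = lam ^+ i *: w.
Proof.
move=> wA; elim: i => [|i IHi]; first by rewrite expr0 scale1r mulmx1.
by rewrite exprSr -mulmxE mulmxA IHi -scalemxAl wA scalerA exprSr.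
Qed.

(* The easy half of the Popov-Belevitch-Hautus test. *)
Lemma kalman_full_left_eigen n m (A : 'M[F]_n) (B : 'M[F]_(n, m)) (w : 'rV_n)
    lam :
  \rank (kalman_mx A B) = n -> w *m A = lam *: w -> w != 0 -> w *m B != 0.
Proof.
move=> fullK wA; apply: contra => /eqP wB0.
have rfK : row_free (kalman_mx A B) by rewrite /row_free fullK.
apply/eqP/(row_free_inj rfK); rewrite mul0mx mul_mxrow.
rewrite -(mxrow0 (q_ := fun=> m)); apply: eq_mxrow => i.
by rewrite mulmxA (left_eigen_mulmxXn _ wA) -scalemxAl wB0 scaler0.
Qed.

Lemma kalman_full_eigenbasis n (A : 'M[F]_n) (b : 'cV[F]_n) (W : 'M[F]_n)
    (lam : 'I_n -> F) :
  injective lam -> (forall j, row j W *m A = lam j *: row j W) ->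
  (forall j, (row j W *m b) 0 0 != 0) -> \rank (kalman_mx A b) = n.
Proof.
move=> lam_inj WA Wb_neq0; apply/eqP; rewrite eqn_leq rank_leq_row /=.
pose T := \mxcol_(i < n) (delta_mx 0 i : 'M[F]_(1, n)).
apply: leq_trans (mxrankM_maxr W _); apply: leq_trans (mxrankM_maxl _ T).
have -> : W *m kalman_mx A b *m T =
    diag_mx (\row_j (row j W *m b) 0 0) *m (Vandermonde n (\row_j lam j))^T.
  have KT : kalman_mx A b *m T = \matrix_(r, i < n) (A ^+ i *m b) r 0.
    rewrite mul_mxrow_mxcol; apply/matrixP => r i.
    rewrite summxE !mxE (bigD1 i) //= big1 => [|l /negPf li]; last first.
      by rewrite !mxE big_ord1 !mxE [i == l]eq_sym li andbF mulr0.
    by rewrite !mxE big_ord1 !mxE !eqxx mulr1 addr0.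
  rewrite -mulmxA KT mul_diag_mx; apply/matrixP => j i.
  transitivity ((row j W *m (A ^+ i *m b)) 0 0).
    by rewrite !mxE; apply: eq_bigr => k _; rewrite !mxE.
  by rewrite mulmxA (left_eigen_mulmxXn _ (WA j)) -scalemxAl !mxE mulrC.
rewrite mxrank_unit // unitmxE unitfE det_mulmx det_tr det_Vandermonde det_diag.
rewrite mulf_neq0 //; apply/prodf_neq0 => i _; first by rewrite mxE.
apply/prodf_neq0 => j ij; rewrite !mxE subr_eq0; apply: contraTneq ij.
by move=> /lam_inj ->; rewrite ltnn.
Qed.

End Kalman.

Lemma map_mx_exp (F K : fieldType) (f : {rmorphism F -> K}) n (A : 'M[F]_n) i :
  map_mx f (A ^+ i) = map_mx f A ^+ i.
Proof.
elim: i => [|i IHi]; first by rewrite !expr0 map_mx1.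
by rewrite !exprS -!mulmxE map_mxM IHi.
Qed.

Lemma map_kalman_mx (F K : fieldType) (f : {rmorphism F -> K}) n m
    (A : 'M[F]_n) (B : 'M[F]_(n, m)) :
  map_mx f (kalman_mx A B) = kalman_mx (map_mx f A) (map_mx f B).
Proof.
apply/matrixP => r s; rewrite !mxE rmorph_sum; apply: eq_bigr => j _.
by rewrite rmorphM -map_mx_exp !mxE.
Qed.

Lemma simple_spectrum_eigenbasis (C : closedFieldType) n (A : 'M[C]_n) :
  (forall z, mup z (char_poly A) <= 1)%N ->
  exists (W : 'M[C]_n) (lam : 'I_n -> C), injective lam /\
    forall j, row j W *m A = lam j *: row j W /\ row j W != 0.
Proof.
move=> mup_le1; have [rs charAE] := closed_field_poly_normal (char_poly A).
rewrite (monicP (char_poly_monic _)) scale1r in charAE.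
have size_rs : size rs = n.
  by have := size_char_poly A; rewrite charAE size_prod_XsubC => -[].
have uniq_rs : uniq rs.
  apply: count_mem_uniq => z; have := mup_le1 z.
  rewrite charAE mu_prod_XsubC -has_pred1 has_count.
  by case: (count _ _) => [|[|]].
pose lam (j : 'I_n) := rs`_j.
have lam_inj : injective lam.
  by move=> i j /eqP; rewrite nth_uniq ?size_rs // => /eqP /val_inj.
have eigenvector j : exists w : 'rV_n, w *m A = lam j *: w /\ w != 0.
  have /eigenvalueP [w wA w_neq0] : eigenvalue A (lam j).
    by rewrite eigenvalue_root_char charAE root_prod_XsubC mem_nth ?size_rs.
  by exists w.
have [w wP] := fin_all_exists eigenvector.
by exists (\matrix_j w j), lam; split=> // j; rewrite rowK.
Qed.

Lemma exists_nat_nonroot (C : numDomainType) (P : {poly C}) :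
  P != 0 -> exists t : nat, ~~ root P t%:R.
Proof.
move=> P_neq0; pose ts := [seq t%:R | t <- iota 0 (size P)] : seq C.
have [all_roots | /allPn [_ /mapP [t _ ->] nonroot]] := boolP (all (root P) ts).
  have uniq_ts : uniq ts.
    by rewrite map_inj_uniq ?iota_uniq // => a c /eqP; rewrite eqr_nat => /eqP.
  have := max_poly_roots P_neq0 all_roots uniq_ts.
  by rewrite size_map size_iota ltnn.
by exists t.
Qed.

Lemma exists_nat_moments_neq0 (C : numDomainType) (I : finType) m
    (c : I -> 'rV[C]_m) :
  (forall j, c j != 0) ->
  exists t : nat, forall j, (c j *m \col_(l < m) (t%:R ^+ l)) 0 0 != 0.
Proof.
move=> c_neq0; pose P j := rVpoly (c j).
have P_neq0 j : P j != 0.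
  apply: contra (c_neq0 j) => /eqP Pj0.
  by rewrite -[c j]rVpolyK -/(P j) Pj0 linear0.
have prodP_neq0 : \prod_j P j != 0 by apply/prodf_neq0 => j _; apply: P_neq0.
have [t nonroot] := exists_nat_nonroot prodP_neq0.
exists t => j; have -> : (c j *m \col_l (t%:R ^+ l)) 0 0 = (P j).[t%:R].
  by rewrite horner_poly mxE; apply: eq_bigr => l _; rewrite valK mxE.
apply: contra nonroot; rewrite /root horner_prod (bigD1 j) //=.
by move=> /eqP ->; rewrite mul0r.
Qed.

Section Sparsity.
Variable R : realType.

Lemma nnz_mul_col n m (B : 'M[R]_(n, m)) (u : 'cV_m) :
  (nnz (B *m u) <= nnz B)%N.
Proof.
apply: leq_trans (leq_imset_card (fun ij : 'I_n * 'I_m => (ij.1, ord0)) _).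
apply: subset_leq_card; apply/subsetP => -[i a]; rewrite !inE /= => Bu_neq0.
have [l Bil] : exists l, B i l != 0.
  apply/existsP; apply: contraR Bu_neq0 => /existsPn Bi0.
  by rewrite mxE big1 // => l _; rewrite (eqP (negbNE (Bi0 l))) mul0r.
by apply/imsetP; exists (i, l); rewrite ?inE // (ord1 a).
Qed.

Lemma nnz_mul_delta n m (b : 'cV[R]_n) (j0 : 'I_m) :
  (nnz (b *m delta_mx ord0 j0) <= nnz b)%N.
Proof.
apply: leq_trans (leq_imset_card (fun ia : 'I_n * 'I_1 => (ia.1, j0)) _).
apply: subset_leq_card; apply/subsetP => -[i j]; rewrite !inE /= mxE big_ord1.
rewrite !mxE; have [-> | ] := eqVneq j j0; last by rewrite andbF mulr0 eqxx.
by rewrite mulr1 => bi_neq0; apply/imsetP; exists (i, ord0); rewrite ?inE.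
Qed.

End Sparsity.

Lemma sparse_controllable_widen (R : realType) n p k (A : 'M[R]_n)
    (Bv : 'cV[R]_n) :
  sparse k Bv -> controllable A Bv ->
  exists Bf : 'M[R]_(n, p.+1), sparse k Bf /\ controllable A Bf.
Proof.
move=> sparse_Bv ctrl_Bv; pose Bf := Bv *m (delta_mx 0 0 : 'M_(1, p.+1)).
exists Bf; split; first exact: leq_trans (nnz_mul_delta _ _) sparse_Bv.
have BvE : Bf *m delta_mx 0 0 = Bv.
  rewrite /Bf -mulmxA mul_delta_mx -[RHS]mulmx1; congr (_ *m _).
  by apply/matrixP => i j; rewrite !ord1 !mxE.
apply/eqP; rewrite eqn_leq rank_leq_row -{1}ctrl_Bv -{1}BvE.
exact: mxrank_kalman_mulmx.
Qed.

Lemma sparse_controllable_compress (R : realType) n p k (A : 'M[R]_n)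
    (Bf : 'M[R]_(n, p)) :
  distinct_eigenvalues A -> sparse k Bf -> controllable A Bf ->
  exists Bv : 'cV[R]_n, sparse k Bv /\ controllable A Bv.
Proof.
move=> simpleA sparse_Bf ctrl_Bf; pose fC := real_complex R.
have [W [lam [lam_inj WP]]] := simple_spectrum_eigenbasis simpleA.
have ctrlC : \rank (kalman_mx (map_mx fC A) (map_mx fC Bf)) = n.
  by rewrite -map_kalman_mx mxrank_map.
have WB_neq0 j : row j W *m map_mx fC Bf != 0.
  exact: kalman_full_left_eigen ctrlC (WP j).1 (WP j).2.
have [t WBu_neq0] := exists_nat_moments_neq0 WB_neq0.
pose u : 'cV[R]_p := \col_l (t%:R ^+ l).
exists (Bf *m u); split; first exact: leq_trans (nnz_mul_col _ _) sparse_Bf.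
rewrite /controllable -(mxrank_map fC) map_kalman_mx.
apply: (kalman_full_eigenbasis lam_inj (fun j => (WP j).1)) => j.
have -> : map_mx fC (Bf *m u) = map_mx fC Bf *m \col_l (t%:R ^+ l).
  rewrite map_mxM; congr (_ *m _).
  by apply/matrixP => l a; rewrite !mxE rmorphXn rmorph_nat.
by rewrite mulmxA.
Qed.

Theorem theorem3 (R : realType) (n p k : nat) (A : 'M[R]_n) :
  distinct_eigenvalues A -> (1 <= p)%N ->
  ((exists Bv : 'cV[R]_n, sparse k Bv /\ controllable A Bv) <->
   (exists Bf : 'M[R]_(n, p), sparse k Bf /\ controllable A Bf)).
Proof.
move=> simpleA; case: p => [//|p] _; split.
  case=> Bv [sparse_Bv ctrl_Bv].
  exact: (sparse_controllable_widen _ sparse_Bv ctrl_Bv).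
case=> Bf [sparse_Bf ctrl_Bf].
exact: (sparse_controllable_compress simpleA sparse_Bf ctrl_Bf).
Qed.
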